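(* Let $n\ge 2$, let $i,j\in\{1,\dots,n-1\}$, let $m\ge 1$ be an integer, and let $W\in B_n^+$. If $W\sigma_i^m=\sigma_j^m W$ in $B_n$, then $W\sigma_i=\sigma_j W$ in $B_n$.
   Context: $B_n$ is Artin's braid group with generators $\sigma_1,\dots,\sigma_{n-1}$ and relations $\sigma_i\sigma_j=\sigma_j\sigma_i$ for $|i-j|\ge 2$ and $\sigma_i\sigma_{i+1}\sigma_i=\sigma_{i+1}\sigma_i\sigma_{i+1}$. $B_n^+$ is the submonoid of $B_n$ of elements representable by positive braid words, i.e. words in $\sigma_1,\dots,\sigma_{n-1}$ without inverses. *)

From mathcomp Require Import all_boot.
Set Implicit Arguments. Unset Strict Implicit. Unset Printing Implicit Defensive.

(* Artin generators of B_n: k : 'I_n.-1 encodes sigma_(k+1), so the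
   generators sigma_1, ..., sigma_(n-1) are exactly the elements of 'I_n.-1.
   A letter (k, true) is sigma_(k+1), (k, false) is its inverse. *)
Definition bletter (n : nat) := ('I_n.-1 * bool)%type.
Definition bword (n : nat) := seq (bletter n).

Definition binv n (x : bletter n) : bletter n := (x.1, ~~ x.2).

Inductive braid_rel (n : nat) : bword n -> bword n -> Prop :=
| brel_cancel (x : bletter n) : braid_rel [:: x; binv x] [::]
| brel_comm (i j : 'I_n.-1) : (i.+2 <= j)%N || (j.+2 <= i)%N ->
    braid_rel [:: (i, true); (j, true)] [:: (j, true); (i, true)]
| brel_braid (i j : 'I_n.-1) : nat_of_ord j = i.+1 ->
    braid_rel [:: (i, true); (j, true); (i, true)]
              [:: (j, true); (i, true); (j, true)].

Inductive braid_eq (n : nat) : bword n -> bword n -> Prop :=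
| beq_refl w : braid_eq w w
| beq_sym u v : braid_eq u v -> braid_eq v u
| beq_trans u v w : braid_eq u v -> braid_eq v w -> braid_eq u w
| beq_rel (u v a b : bword n) : braid_rel a b ->
    braid_eq (u ++ a ++ v) (u ++ b ++ v).

Definition pos_word n (w : seq 'I_n.-1) : bword n := [seq (k, true) | k <- w].

From mathcomp Require Import all_boot zify.
Set Implicit Arguments. Unset Strict Implicit. Unset Printing Implicit Defensive.

(* Garside's argument.  The positive monoid B_n^+ embeds in B_n: the full twist
   Delta^2 is central and Delta^2 sigma_k^-1 is a positive word, so multiplying
   both sides of an equality in B_n by a power of Delta^2 gives an equality in
   B_n^+, from which that power cancels.  B_n^+ is cancellative and any two
   generators have a least common multiple (sigma_a, sigma_a sigma_b or
   sigma_a sigma_b sigma_a); both facts are proved together by induction on the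
   length of words.  In B_n^+ the theorem follows by induction on W = sigma_c W':
   if c = j, cancel sigma_c; if sigma_c and sigma_j commute, move sigma_c past
   sigma_j^m and cancel; if they are adjacent, the lcm property forces
   W' = sigma_j Z, and the braid relation reduces the hypothesis to
   Z sigma_i^m = sigma_c^m Z for the shorter word Z. *)

(** * The positive braid monoid *)

(* Positive words over the Artin generators, [a : nat] standing for
   sigma_(a+1); [peq] is equality in the positive braid monoid on infinitely
   many strands. *)

Definition far (a b : nat) := (a.+2 <= b) || (b.+2 <= a).
Definition adjacent (a b : nat) := (b == a.+1) || (a == b.+1).

Ltac gen_lia := unfold far, adjacent in *; lia.

Lemma far_sym a b : far a b -> far b a. Proof. gen_lia. Qed.
Lemma adjacent_sym a b : adjacent a b -> adjacent b a. Proof. gen_lia. Qed.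
Lemma far_irr a : ~ far a a. Proof. gen_lia. Qed.
Lemma adjacent_irr a : ~ adjacent a a. Proof. gen_lia. Qed.

Lemma generator_cases a b : [\/ a = b, far a b | adjacent a b].
Proof.
case: (eqVneq a b) => [->|ne]; first by constructor 1.
by case Hf: (far a b); [constructor 2 | constructor 3; move: ne Hf; gen_lia].
Qed.

Inductive pmove : seq nat -> seq nat -> Prop :=
| pmove_comm u v a b : far a b -> pmove (u ++ a :: b :: v) (u ++ b :: a :: v)
| pmove_braid u v a b : adjacent a b ->
    pmove (u ++ a :: b :: a :: v) (u ++ b :: a :: b :: v).

Inductive peq : seq nat -> seq nat -> Prop :=
| peq_refl s : peq s s
| peq_step s t u : pmove s t -> peq t u -> peq s u.

Lemma peq_trans s t u : peq s t -> peq t u -> peq s u.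
Proof. by elim=> // {}s t0 u0 st _ IH /IH; apply: peq_step. Qed.

Lemma pmove_peq s t : pmove s t -> peq s t.
Proof. by move=> st; apply: peq_step st (peq_refl _). Qed.

Lemma pmove_sym s t : pmove s t -> pmove t s.
Proof.
by case=> u v a b H; [apply/pmove_comm/far_sym | apply/pmove_braid/adjacent_sym].
Qed.

Lemma peq_sym s t : peq s t -> peq t s.
Proof.
elim=> [s0|{}s t0 u0 st _ IH]; first exact: peq_refl.
exact/(peq_trans IH)/pmove_peq/pmove_sym.
Qed.

Lemma pmove_cat x y s t : pmove s t -> pmove (x ++ s ++ y) (x ++ t ++ y).
Proof.
by case=> u v a b H; rewrite -!catA /= !catA; [apply: pmove_comm | apply: pmove_braid].
Qed.

Lemma peq_cat x y s t : peq s t -> peq (x ++ s ++ y) (x ++ t ++ y).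
Proof.
elim=> [s0|{}s t0 u0 st _ IH]; first exact: peq_refl.
exact: peq_step (pmove_cat x y st) IH.
Qed.

Lemma peq_catl x s t : peq s t -> peq (x ++ s) (x ++ t).
Proof. by move/(peq_cat x [::]); rewrite !cats0. Qed.

Lemma peq_catr y s t : peq s t -> peq (s ++ y) (t ++ y).
Proof. exact: peq_cat [::] y s t. Qed.

Lemma peq_cons a s t : peq s t -> peq (a :: s) (a :: t).
Proof. exact: peq_catl [:: a] s t. Qed.

Lemma peq_swap a b s : far a b -> peq [:: a, b & s] [:: b, a & s].
Proof. by move=> H; apply/pmove_peq/(pmove_comm [::]). Qed.

Lemma peq_braid a b s : adjacent a b -> peq [:: a, b, a & s] [:: b, a, b & s].
Proof. by move=> H; apply/pmove_peq/(pmove_braid [::]). Qed.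

Lemma size_peq s t : peq s t -> size s = size t.
Proof. by elim=> // {}s t0 u0 [] u v a b _ _ <-; rewrite !size_cat. Qed.

Lemma peq_rev s t : peq s t -> peq (rev s) (rev t).
Proof.
elim=> [s0|{}s t0 u0 st _]; first exact: peq_refl.
apply: peq_step; case: st => u v a b H; rewrite !rev_cat !rev_cons -!cats1 -!catA /=.
- exact/pmove_comm/far_sym.
- exact: pmove_braid.
Qed.

(** * Least common multiples and cancellation *)

(* If [a :: X = b :: Y], this common multiple of [a] and [b] is a multiple of
   their least common multiple [a], [a b] or [a b a]; [through_lcm] records the
   resulting factorisations of [X] and [Y]. *)
Definition through_lcm a b X Y :=
  [/\ a = b -> peq X Y,
      far a b -> exists Z, peq X (b :: Z) /\ peq Y (a :: Z)
    & adjacent a b -> exists Z, peq X [:: b, a & Z] /\ peq Y [:: a, b & Z]].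

Lemma through_lcm_sym a b X Y : through_lcm a b X Y -> through_lcm b a Y X.
Proof.
case=> Heq Hfar Hadj; split.
- by move=> E; apply/peq_sym/Heq.
- by move/far_sym/Hfar=> [Z [? ?]]; exists Z.
- by move/adjacent_sym/Hadj=> [Z [? ?]]; exists Z.
Qed.

Lemma through_lcm_peq a b X Y X' Y' :
  peq X X' -> peq Y Y' -> through_lcm a b X Y -> through_lcm a b X' Y'.
Proof.
move=> /peq_sym HX /peq_sym HY [Heq Hfar Hadj]; split.
- by move/Heq=> H; apply: peq_trans HX (peq_trans H (peq_sym HY)).
- by move/Hfar=> [Z [? ?]]; exists Z; split; apply: peq_trans; eassumption.
- by move/Hadj=> [Z [? ?]]; exists Z; split; apply: peq_trans; eassumption.
Qed.

Lemma through_lcm_refl a X : through_lcm a a X X.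
Proof. by split=> [_|/far_irr|/adjacent_irr]; first exact: peq_refl. Qed.

Lemma pmove_through_lcm a b X Y : pmove (a :: X) (b :: Y) -> through_lcm a b X Y.
Proof.
move E1: (a :: X) => s; move E2: (b :: Y) => t st.
case: st E1 E2 => [u v x y H|u v x y H]; case: u => [|w u] /= [-> ->] [-> ->].
- split=> [E|_|Hadj]; first by move: H; rewrite E => /far_irr.
  + by exists v; split; apply: peq_refl.
  + by move: H Hadj; gen_lia.
- exact: through_lcm_peq (peq_refl _) (pmove_peq (pmove_comm _ _ H))
           (through_lcm_refl _ _).
- split=> [E|Hfar|_]; first by move: H; rewrite E => /adjacent_irr.
  + by move: H Hfar; gen_lia.
  + by exists v; split; apply: peq_refl.
- exact: through_lcm_peq (peq_refl _) (pmove_peq (pmove_braid _ _ H))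
           (through_lcm_refl _ _).
Qed.

Section LcmTransitivity.

Variable d : nat.
Hypothesis lcm_shorter : forall a b X Y,
  size X < d -> peq (a :: X) (b :: Y) -> through_lcm a b X Y.

Lemma through_lcm_trans_far_far a c b X U Y :
  size X = d -> far a c -> far c b ->
  through_lcm a c X U -> through_lcm c b U Y -> through_lcm a b X Y.
Proof.
move=> sX Hac Hcb [_ H1 _] [_ H2 _].
case: (H1 Hac) => Z1 [HX HU]; case: (H2 Hcb) => Z2 [HU2 HY].
have sZ1 : size Z1 < d by move: (size_peq HX); rewrite sX /=; lia.
case: (lcm_shorter sZ1 (peq_trans (peq_sym HU) HU2)) => Heq Hfar Hadj; split.
- move=> Eab; apply: (peq_trans HX); apply: peq_trans (peq_sym HY).
  exact/peq_cons/Heq.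
- move=> Hab; case: (Hfar Hab) => Z [HZ1 HZ2]; exists (c :: Z); split.
  + apply: (peq_trans HX); apply: (peq_trans (peq_cons c HZ1)).
    by apply: peq_swap; gen_lia.
  + apply: (peq_trans HY); apply: (peq_trans (peq_cons c HZ2)).
    by apply: peq_swap; gen_lia.
- move=> Hab; case: (Hadj Hab) => Z [HZ1 HZ2]; exists (c :: Z); split.
  + apply: (peq_trans HX); apply: (peq_trans (peq_cons c HZ1)).
    apply: (peq_trans (peq_swap _ Hcb)); apply/peq_cons/peq_swap; gen_lia.
  + apply: (peq_trans HY); apply: (peq_trans (peq_cons c HZ2)).
    apply: (peq_trans (peq_swap _ (far_sym Hac))); apply/peq_cons/peq_swap; gen_lia.
Qed.

Lemma through_lcm_trans_far_adjacent a c b X U Y :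
  size X = d -> far a c -> adjacent c b ->
  through_lcm a c X U -> through_lcm c b U Y -> through_lcm a b X Y.
Proof.
move=> sX Hac Hcb [_ H1 _] [_ _ H2].
case: (H1 Hac) => Z1 [HX HU]; case: (H2 Hcb) => Z2 [HU2 HY].
have E := peq_trans (peq_sym HU) HU2.
have sZ1 : size Z1 < d by move: (size_peq HX); rewrite sX /=; lia.
have sZ2 : size Z2 < d by move: (size_peq E); rewrite /=; lia.
case: (lcm_shorter sZ1 E) => _ Hfar Hadj; split.
- by move=> Eab; exfalso; gen_lia.
- move=> Hab; case: (Hfar Hab) => Z [HZ1 HZ2].
  case: (lcm_shorter sZ2 HZ2) => _ /(_ (far_sym Hac)) [Z3 [HZ2' HZ']] _.
  exists [:: c, b & Z3]; split.
  + apply: (peq_trans HX).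
    apply: (peq_trans (peq_cons c (peq_trans HZ1 (peq_cons b HZ')))).
    by apply: peq_braid; gen_lia.
  + apply: (peq_trans HY); apply: (peq_trans (peq_cons c (peq_cons b HZ2'))).
    apply: (peq_trans (peq_cons c (peq_swap _ (far_sym Hab)))).
    by apply: peq_swap; gen_lia.
- move=> Hab; case: (Hadj Hab) => Z [HZ1 HZ2].
  case: (lcm_shorter sZ2 HZ2) => _ /(_ (far_sym Hac)) [Z3 [HZ2' HZ']] _.
  have sZ : size Z < d.
    by move: (size_peq HZ') (size_peq HZ2'); rewrite /=; lia.
  case: (lcm_shorter sZ HZ') => _ _ /(_ (adjacent_sym Hcb)) [Z4 [HZ HZ3]].
  exists [:: c, b, a & Z4]; split.
  + apply: (peq_trans HX).
    apply: (peq_trans (peq_cons c (peq_trans HZ1 (peq_cons b (peq_cons a HZ))))).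
    apply: (peq_trans (peq_cons c (peq_cons b (peq_swap _ Hac)))).
    apply: (peq_trans (peq_braid _ Hcb)).
    apply: (peq_trans (peq_cons b (peq_cons c (peq_braid _ (adjacent_sym Hab))))).
    by apply: peq_cons; apply: peq_swap; gen_lia.
  + apply: (peq_trans HY).
    apply: (peq_trans (peq_cons c (peq_cons b (peq_trans HZ2' (peq_cons a HZ3))))).
    apply: (peq_trans (peq_cons c (peq_braid _ (adjacent_sym Hab)))).
    apply: (peq_trans (peq_swap _ (far_sym Hac))).
    apply: (peq_trans (peq_cons a (peq_cons c (peq_cons b (peq_swap _ Hac))))).
    by apply: peq_cons; apply: peq_braid; gen_lia.
Qed.

Lemma through_lcm_trans_adjacent_adjacent a c b X U Y :
  size X = d -> adjacent a c -> adjacent c b ->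
  through_lcm a c X U -> through_lcm c b U Y -> through_lcm a b X Y.
Proof.
move=> sX Hac Hcb [_ _ H1] [_ _ H2].
case: (H1 Hac) => Z1 [HX HU]; case: (H2 Hcb) => Z2 [HU2 HY].
have E := peq_trans (peq_sym HU) HU2.
have sZ1 : size Z1 < d by move: (size_peq HX); rewrite sX /=; lia.
have sZ2 : size Z2 < d by move: (size_peq E); rewrite /=; lia.
have scZ1 : size (c :: Z1) < d by move: (size_peq HX); rewrite sX /=; lia.
case: (lcm_shorter scZ1 E) => Heq Hfar _; split.
- move=> Eab; subst b.
  case: (lcm_shorter sZ1 (Heq erefl)) => /(_ erefl) HZ _ _.
  apply: (peq_trans HX); apply: peq_trans (peq_sym HY).
  exact/peq_cons/peq_cons/HZ.
- move=> Hab; case: (Hfar Hab) => Z [HZ1 HZ2].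
  case: (lcm_shorter sZ1 HZ1) => _ _ /(_ Hcb) [Z5 [HZ1' HZa]].
  case: (lcm_shorter sZ2 HZ2) => _ _ /(_ (adjacent_sym Hac)) [Z6 [HZ2' HZb]].
  have sbZ5 : size (b :: Z5) < d by move: (size_peq HZ1'); rewrite /=; lia.
  have sZ5 : size Z5 < d by move: sbZ5; rewrite /=; lia.
  case: (lcm_shorter sbZ5 (peq_trans (peq_sym HZa) HZb)) => /(_ erefl) E5 _ _.
  case: (lcm_shorter sZ5 E5) => _ /(_ (far_sym Hab)) [Z7 [HZ5 HZ6]] _.
  exists [:: c, a, b, c & Z7]; split.
  + apply: (peq_trans HX).
    apply: (peq_trans (peq_cons c (peq_cons a
              (peq_trans HZ1' (peq_cons b (peq_cons c HZ5)))))).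
    apply: (peq_trans (peq_cons c (peq_swap _ Hab))).
    apply: (peq_trans (peq_cons c (peq_cons b (peq_braid _ Hac)))).
    apply: (peq_trans (peq_braid _ Hcb)).
    by apply/peq_cons/peq_cons/peq_swap; gen_lia.
  + apply: (peq_trans HY).
    apply: (peq_trans (peq_cons c (peq_cons b
              (peq_trans HZ2' (peq_cons a (peq_cons c HZ6)))))).
    apply: (peq_trans (peq_cons c (peq_swap _ (far_sym Hab)))).
    apply: (peq_trans (peq_cons c (peq_cons a (peq_braid _ (adjacent_sym Hcb))))).
    by apply: peq_braid; gen_lia.
- by move=> Hab; exfalso; gen_lia.
Qed.

Lemma through_lcm_trans a c b X U Y : size X = d -> size Y = d ->
  through_lcm a c X U -> through_lcm c b U Y -> through_lcm a b X Y.
Proof.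
move=> sX sY H1 H2.
case: (generator_cases c b) => [Ecb|Hcb|Hcb].
  subst c; case: H2 => /(_ erefl) HUY _ _.
  exact: through_lcm_peq (peq_refl _) HUY H1.
all: case: (generator_cases a c) => [Eac|Hac|Hac];
  first by subst c; case: H1 => /(_ erefl) /peq_sym HXU _ _;
           apply: through_lcm_peq HXU (peq_refl _) H2.
- exact: through_lcm_trans_far_far sX Hac Hcb H1 H2.
- apply: through_lcm_sym.
  exact: through_lcm_trans_far_adjacent sY (far_sym Hcb) (adjacent_sym Hac)
           (through_lcm_sym H2) (through_lcm_sym H1).
- exact: through_lcm_trans_far_adjacent sX Hac Hcb H1 H2.
- exact: through_lcm_trans_adjacent_adjacent sX Hac Hcb H1 H2.
Qed.

End LcmTransitivity.

Lemma peq_through_lcm a b X Y : peq (a :: X) (b :: Y) -> through_lcm a b X Y.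
Proof.
have [d] := ubnP (size X); elim: d a b X Y => // d IH a b X Y /ltnSE sXd.
have lcm_shorter a' b' X' Y' : size X' < size X ->
    peq (a' :: X') (b' :: Y') -> through_lcm a' b' X' Y'.
  by move=> sX'; apply: IH; apply: leq_trans sX' sXd.
move Es: (a :: X) => s; move Et: (b :: Y) => t E.
elim: E a X Es Et sXd lcm_shorter => [s0|s0 t0 u0 st E' IHE] a X Es Et sXd IHX;
  subst s0; first by case: Et => -> ->; apply: through_lcm_refl.
have [sU sY] : size t0 = (size X).+1 /\ size Y = size X.
  by move: (size_peq (pmove_peq st)) (size_peq E'); rewrite -Et /=; lia.
case: t0 st E' IHE sU => [//|c U] st E' IHE [sU].
apply: (through_lcm_trans IHX) (pmove_through_lcm st) _ => //.
by apply: IHE; rewrite ?sU.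
Qed.

Lemma peq_cancel_head a X Y : peq (a :: X) (a :: Y) -> peq X Y.
Proof. by case/peq_through_lcm => /(_ erefl). Qed.

Lemma peq_cancell u X Y : peq (u ++ X) (u ++ Y) -> peq X Y.
Proof. by elim: u => //= a u IH /peq_cancel_head /IH. Qed.

Lemma peq_cancel_last a X Y : peq (X ++ [:: a]) (Y ++ [:: a]) -> peq X Y.
Proof.
by move/peq_rev; rewrite !rev_cat /= => /peq_cancel_head /peq_rev; rewrite !revK.
Qed.

Lemma pmove_nseq k a t : ~ pmove (nseq k a) t.
Proof.
move Es: (nseq k a) => s st.
have [u [v [b [c [E Hbc]]]]] :
    exists u v b c, s = u ++ b :: c :: v /\ (far b c || adjacent b c).
  case: st => u v b c H; [exists u, v | exists u, (b :: v)]; exists b, c.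
    by rewrite H.
  by rewrite H orbT.
have : (b \in nseq k a) && (c \in nseq k a).
  by rewrite Es E !mem_cat !inE !eqxx !orbT.
rewrite !mem_nseq => /andP [/andP [_ /eqP Eb] /andP [_ /eqP Ec]].
by move: Hbc; rewrite Eb Ec => /orP [/far_irr|/adjacent_irr].
Qed.

Lemma peq_nseq k a t : peq (nseq k a) t -> t = nseq k a.
Proof.
move Es: (nseq k a) => s E; case: E Es => // s0 t0 u0 st _ Es.
by rewrite -Es in st; case: (pmove_nseq st).
Qed.

Lemma peq_nseq_swap m j k v :
  far k j -> peq (nseq m j ++ k :: v) (k :: nseq m j ++ v).
Proof.
move=> Hkj; elim: m => [|m IH] /=; first exact: peq_refl.
by apply: (peq_trans (peq_cons j IH)); apply/peq_swap/far_sym.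
Qed.

Lemma peq_nseq_braid m j k Z : adjacent j k ->
  peq (nseq m j ++ [:: k, j & Z]) [:: k, j & nseq m k ++ Z].
Proof.
move=> Hjk; elim: m => [|m IH] /=; first exact: peq_refl.
by apply: (peq_trans (peq_cons j IH)); apply: peq_braid.
Qed.

Lemma peq_cons_nseq_adjacent m k j u v : adjacent k j -> 0 < m ->
  peq (k :: u) (nseq m j ++ v) -> exists Z, peq v [:: k, j & Z].
Proof.
move=> Hkj; elim: m u => // m IH u _ /=.
case/peq_through_lcm => _ _ /(_ Hkj) [Z [_ HZ]].
move: IH HZ; case: m => [|m] IH HZ; first by exists Z.
exact: IH (peq_sym HZ).
Qed.

Lemma peq_pow_conj m i j W : 0 < m ->
  peq (W ++ nseq m i) (nseq m j ++ W) -> peq (W ++ [:: i]) (j :: W).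
Proof.
move=> m_gt0; have [d] := ubnP (size W); elim: d W j => // d IH W j /ltnSE sW.
case: W sW => [_|c W] /=.
  rewrite cats0 => /peq_nseq.
  by case: m {IH} m_gt0 => // m _ [-> _]; apply: peq_refl.
move=> sW E; case: (generator_cases c j) => [Ecj|Hcj|Hcj]; first subst j.
- move: E; rewrite -[nseq m c ++ _]/(nseq m c ++ nseq 1 c ++ W) catA -nseqD addn1.
  move=> /peq_cancel_head E.
  exact/peq_cons/(IH W c sW E).
- have /peq_cancel_head E' := peq_trans E (peq_nseq_swap m W Hcj).
  apply: (peq_trans (peq_cons c (IH W j sW E'))).
  exact: peq_swap.
- (* W = c j Z, and Z satisfies the hypothesis with c in place of j *)
  have [Z /peq_cancel_head HW] := peq_cons_nseq_adjacent Hcj m_gt0 E.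
  have sZ : size Z < d by move: (size_peq HW) sW; rewrite /=; lia.
  have EZ : peq (Z ++ nseq m i) (nseq m c ++ Z).
    apply/(@peq_cancell [:: c; j]).
    apply: peq_trans (peq_nseq_braid _ _ (adjacent_sym Hcj)).
    apply: (peq_trans (peq_cons c (peq_catr _ (peq_sym HW)))).
    by apply: (peq_trans E); apply/peq_catl/peq_cons.
  apply: (peq_trans (peq_cons c (peq_catr [:: i] HW))) => /=.
  apply: (peq_trans (peq_cons c (peq_cons j (IH Z c sZ EZ)))).
  apply: (peq_trans (peq_braid _ Hcj)).
  exact/peq_cons/peq_cons/peq_sym.
Qed.

Lemma peq_far_all x s T : all (far x) s -> peq (s ++ x :: T) (x :: s ++ T).
Proof.
elim: s => [|y s IH] /=; first by move=> _; apply: peq_refl.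
case/andP=> Hxy /IH Hs; apply: (peq_trans (peq_cons y Hs)).
exact/peq_swap/far_sym.
Qed.

Lemma peq_iota_twice_step m p T : all (far m.+1) p ->
  peq (p ++ [:: m, m.+1 & p] ++ [:: m, m.+1 & T])
      (p ++ [:: m & p] ++ [:: m, m.+1, m & T]).
Proof.
move=> /peq_far_all Hp; apply/peq_catl/peq_cons.
apply: (peq_trans (peq_sym (Hp _))); apply: peq_catl.
by apply: peq_braid; gen_lia.
Qed.

Lemma peq_iota_twice_last m :
  peq (iota 0 m.+1 ++ iota 0 m.+1 ++ [:: m]) (0 :: iota 0 m.+1 ++ iota 0 m.+1).
Proof.
elim: m => [|m IH]; first exact: peq_refl.
have Hp : all (far m.+1) (iota 0 m) by apply/allP=> y; rewrite mem_iota; gen_lia.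
have Em1 : iota 0 m.+1 = iota 0 m ++ [:: m] by rewrite -addn1 iotaD.
have Em2 : iota 0 m.+2 = iota 0 m ++ [:: m; m.+1] by rewrite -addn2 iotaD.
rewrite Em1 -!catA /= in IH; rewrite Em2 -!catA /=.
apply: (peq_trans (peq_iota_twice_step [:: m.+1] Hp)).
apply: peq_trans (peq_sym (peq_cons 0 (peq_iota_twice_step [::] Hp))).
rewrite !cat_cons.
apply: (peq_trans (peq_catl _ (peq_cons m (peq_catl _
          (peq_cons m (peq_braid [::] _)))))); first gen_lia.
by move: (peq_catr [:: m.+1; m] IH); rewrite !(cat_cons, =^~ catA).
Qed.

Lemma peq_conj_cat s t a b c :
  peq (s ++ [:: a]) (b :: s) -> peq (t ++ [:: b]) (c :: t) ->
  peq ((t ++ s) ++ [:: a]) (c :: t ++ s).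
Proof.
move=> Hs Ht; rewrite -catA; apply: (peq_trans (peq_catl t Hs)).
by rewrite -cat_rcons -cats1; apply: peq_catr Ht.
Qed.

(** * The full twist *)

(* [delta] is sigma_1 ... sigma_N in B_(N+1); its power [Delta2 = delta^(N+1)]
   is the full twist, central in B_(N+1)^+. *)
Section FullTwist.

Variable N : nat.

Definition delta := iota 0 N.
Definition delta_pow c := flatten (nseq c delta).
Definition Delta2 := delta_pow N.+1.
Definition Delta2_pow r := flatten (nseq r Delta2).

Lemma delta_powS c : delta_pow c.+1 = delta ++ delta_pow c.
Proof. by []. Qed.

Lemma delta_powD a b : delta_pow (a + b) = delta_pow a ++ delta_pow b.
Proof. by rewrite /delta_pow nseqD flatten_cat. Qed.

Lemma Delta2_powS r : Delta2_pow r.+1 = Delta2 ++ Delta2_pow r.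
Proof. by []. Qed.

Lemma Delta2_pow2 : Delta2_pow 2 = Delta2 ++ Delta2.
Proof. by rewrite /Delta2_pow /= cats0. Qed.

Lemma Delta2_powD a b : Delta2_pow (a + b) = Delta2_pow a ++ Delta2_pow b.
Proof. by rewrite /Delta2_pow nseqD flatten_cat. Qed.

Lemma Delta2_powC a b : Delta2_pow a ++ Delta2_pow b = Delta2_pow b ++ Delta2_pow a.
Proof. by rewrite -!Delta2_powD addnC. Qed.

Lemma peq_delta_letter k : k.+1 < N -> peq (delta ++ [:: k]) (k.+1 :: delta).
Proof.
move=> kN; rewrite /delta; have -> : N = k + (N - k.+2).+2 by lia.
rewrite iotaD /= add0n -!catA /=; set r := iota k.+2 _.
have /peq_far_all Hr : all (far k) r by apply/allP=> y; rewrite mem_iota; gen_lia.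
have /peq_far_all Hk : all (far k.+1) (iota 0 k).
  by apply/allP=> y; rewrite mem_iota; gen_lia.
apply/(peq_trans (peq_catl _ (peq_cons k (peq_cons k.+1 (Hr [::]))))).
rewrite cats0; apply: (peq_trans (peq_catl _ (peq_braid r _))); first gen_lia.
exact: Hk.
Qed.

Lemma peq_delta_pow_letter c k : k + c < N ->
  peq (delta_pow c ++ [:: k]) (k + c :: delta_pow c).
Proof.
elim: c => [|c IH] kcN; first by rewrite addn0; apply: peq_refl.
rewrite delta_powS addnS; apply: peq_conj_cat (IH _) (peq_delta_letter _); lia.
Qed.

Definition Delta2_cofactor k :=
  delta_pow k.+1 ++ iota 0 N.-1 ++ delta_pow (N.-1 - k).

Lemma all_delta_pow c : all (gtn N) (delta_pow c).
Proof.
elim: c => // c IH; rewrite delta_powS all_cat IH andbT.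
by apply/allP=> x; rewrite mem_iota.
Qed.

Lemma all_Delta2 : all (gtn N) Delta2.
Proof. exact: all_delta_pow. Qed.

Lemma all_Delta2_cofactor k : all (gtn N) (Delta2_cofactor k).
Proof.
rewrite /Delta2_cofactor all_cat all_delta_pow all_cat all_delta_pow andbT /=.
by apply/allP=> x; rewrite mem_iota /=; lia.
Qed.

Hypothesis N_gt0 : 0 < N.

Lemma peq_delta2_last : peq (delta_pow 2 ++ [:: N.-1]) (0 :: delta_pow 2).
Proof.
by move: (peq_iota_twice_last N.-1); rewrite prednK // /delta_pow /= cats0 -catA.
Qed.

Lemma peq_delta_pow_top k : k < N ->
  peq (delta_pow (N.-1 - k) ++ [:: k]) (N.-1 :: delta_pow (N.-1 - k)).
Proof.
move=> kN; set c := N.-1 - k; have -> : N.-1 = k + c by lia.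
by apply: peq_delta_pow_letter; lia.
Qed.

Lemma peq_Delta2_letter k : k < N -> peq (Delta2 ++ [:: k]) (k :: Delta2).
Proof.
move=> kN; have -> : Delta2 = (delta_pow k ++ delta_pow 2) ++ delta_pow (N.-1 - k).
  by rewrite /Delta2 -!delta_powD; congr delta_pow; lia.
have Hk : peq (delta_pow k ++ [:: 0]) (k :: delta_pow k).
  by rewrite -[in k :: _](add0n k); apply: peq_delta_pow_letter.
exact: peq_conj_cat (peq_delta_pow_top kN) (peq_conj_cat peq_delta2_last Hk).
Qed.

Lemma peq_Delta2_comm s : all (gtn N) s -> peq (Delta2 ++ s) (s ++ Delta2).
Proof.
elim: s => [_|k s IH] /=; first by rewrite cats0; apply: peq_refl.
case/andP=> kN /IH Hs; rewrite -cat1s catA.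
apply: (peq_trans (peq_catr s (peq_Delta2_letter kN))); exact: peq_cons Hs.
Qed.

Lemma peq_Delta2_pow_comm r s :
  all (gtn N) s -> peq (Delta2_pow r ++ s) (s ++ Delta2_pow r).
Proof.
move=> Hs; elim: r => [|r IH]; first by rewrite /= cats0; apply: peq_refl.
rewrite Delta2_powS -catA; apply: (peq_trans (peq_catl _ IH)).
by move: (peq_catr (Delta2_pow r) (peq_Delta2_comm Hs)); rewrite -!catA.
Qed.

Lemma peq_Delta2_cofactor_r k : k < N -> peq (Delta2_cofactor k ++ [:: k]) Delta2.
Proof.
move=> kN; have -> : Delta2 = delta_pow k.+1 ++ delta_pow (N.-1 - k).+1.
  by rewrite /Delta2 -delta_powD; congr delta_pow; lia.
have Edelta : delta = iota 0 N.-1 ++ [:: N.-1].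
  by rewrite /delta -{1}(prednK N_gt0) -addn1 iotaD.
rewrite /Delta2_cofactor [delta_pow (_ - k).+1]delta_powS Edelta -!catA.
apply/peq_catl/peq_catl/peq_catl.
exact: peq_delta_pow_top.
Qed.

Lemma peq_Delta2_cofactor_l k : k < N -> peq (k :: Delta2_cofactor k) Delta2.
Proof.
move=> kN; apply: (@peq_cancel_last k); rewrite cat_cons.
apply: (peq_trans (peq_cons k (peq_Delta2_cofactor_r kN))).
exact/peq_sym/peq_Delta2_letter.
Qed.

End FullTwist.

(** * Embedding of B_n^+ into B_n *)

Section Embedding.

Variable n : nat.
Hypothesis n_ge2 : 2 <= n.
Local Notation N := n.-1.

Let N_gt0 : 0 < N. Proof. by rewrite -subn1 subn_gt0. Qed.

(* The letter sigma_k^(+-1) is sent to the positive word Delta2 sigma_k^(+-1),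
   so [word_image w] represents Delta2^(size w) w, and [u] and [v] are equal in
   B_n iff [image_equiv u v] holds. *)
Definition letter_image (x : bletter n) : seq nat :=
  if x.2 then Delta2 N ++ [:: val x.1] else Delta2_cofactor N (val x.1).

Definition word_image (w : bword n) := flatten (map letter_image w).

Definition image_equiv (u v : bword n) :=
  peq (Delta2_pow N (size v) ++ word_image u)
      (Delta2_pow N (size u) ++ word_image v).

Lemma word_image_cat u v : word_image (u ++ v) = word_image u ++ word_image v.
Proof. by rewrite /word_image map_cat flatten_cat. Qed.

Lemma all_word_image w : all (gtn N) (word_image w).
Proof.
elim: w => // [[k []]] w IH; rewrite /word_image /= -/(word_image w) all_cat IH andbT.
- by rewrite all_cat all_Delta2 /= ltn_ord.
- exact: all_Delta2_cofactor.
Qed.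

Lemma peq_word_image_pos U :
  peq (word_image (pos_word U)) (Delta2_pow N (size U) ++ map val U).
Proof.
elim: U => [|k U IH] /=; first exact: peq_refl.
rewrite /word_image /= -/(word_image _) /letter_image /= -catA.
apply: (peq_trans (peq_catl _ (peq_cons _ IH))).
rewrite Delta2_powS -catA; apply: peq_catl; rewrite -cat_rcons -cats1.
have kN : all (gtn N) [:: val k] by rewrite /= ltn_ord.
exact: peq_catr _ (peq_sym (peq_Delta2_pow_comm N_gt0 _ kN)).
Qed.

Lemma peq_word_image_cancel x : peq (word_image [:: x; binv x]) (Delta2_pow N 2).
Proof.
case: x => k []; rewrite /word_image /binv /letter_image /= cats0 Delta2_pow2.
- by rewrite -catA; apply/peq_catl/peq_Delta2_cofactor_l.
- have HD := peq_Delta2_comm N_gt0 (all_Delta2_cofactor N k).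
  rewrite catA; apply: (peq_trans (peq_catr _ (peq_sym HD))).
  by rewrite -catA; apply/peq_catl/peq_Delta2_cofactor_r.
Qed.

Lemma image_equiv_sym u v : image_equiv u v -> image_equiv v u.
Proof. exact: peq_sym. Qed.

Lemma image_equiv_trans u v w :
  image_equiv u v -> image_equiv v w -> image_equiv u w.
Proof.
rewrite /image_equiv => Huv Hvw; apply: (@peq_cancell (Delta2_pow N (size v))).
rewrite !catA Delta2_powC -catA; apply: (peq_trans (peq_catl _ Huv)).
rewrite catA Delta2_powC -catA; apply: (peq_trans (peq_catl _ Hvw)).
by rewrite catA Delta2_powC -catA; apply: peq_refl.
Qed.

Lemma image_equiv_cat_same_size u v a b : size a = size b ->
  peq (word_image a) (word_image b) -> image_equiv (u ++ a ++ v) (u ++ b ++ v).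
Proof.
move=> sab Hab; rewrite /image_equiv !size_cat sab !word_image_cat.
exact/peq_catl/peq_cat.
Qed.

Lemma image_equiv_cat_cancel u v x :
  image_equiv (u ++ [:: x; binv x] ++ v) (u ++ [::] ++ v).
Proof.
rewrite /image_equiv !size_cat !word_image_cat /= add0n.
apply: (peq_trans (peq_catl _ (peq_cat _ _ (peq_word_image_cancel x)))).
have Hu := peq_Delta2_pow_comm N_gt0 2 (all_word_image u).
rewrite [word_image u ++ _]catA.
apply: (peq_trans (peq_catl _ (peq_catr _ (peq_sym Hu)))).
by rewrite -catA catA -Delta2_powD addnAC -addnA; apply: peq_refl.
Qed.

Lemma peq_word_image_pos_word (s t : seq 'I_N) :
  size s = size t -> peq (map val s) (map val t) ->
  peq (word_image (pos_word s)) (word_image (pos_word t)).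
Proof.
move=> st Hst; apply: (peq_trans (peq_word_image_pos s)).
by apply: peq_trans (peq_sym (peq_word_image_pos t)); rewrite st; apply: peq_catl.
Qed.

Lemma image_equiv_rel u v a b :
  braid_rel a b -> image_equiv (u ++ a ++ v) (u ++ b ++ v).
Proof.
case=> [x | i j Hij | i j Hij]; first exact: image_equiv_cat_cancel.
- apply: image_equiv_cat_same_size => //.
  apply: (peq_word_image_pos_word (s := [:: i; j]) (t := [:: j; i])) => //.
  exact: peq_swap.
- apply: image_equiv_cat_same_size => //.
  apply: (peq_word_image_pos_word (s := [:: i; j; i]) (t := [:: j; i; j])) => //.
  by apply: peq_braid; rewrite /adjacent /= Hij eqxx.
Qed.

Lemma braid_eq_image_equiv (u v : bword n) : braid_eq u v -> image_equiv u v.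
Proof.
elim=> [w | {}u {}v _ | {}u {}v w _ Huv _ Hvw | {}u {}v a b].
- exact: peq_refl.
- exact: image_equiv_sym.
- exact: image_equiv_trans Huv Hvw.
- exact: image_equiv_rel.
Qed.

Lemma braid_eq_pos_peq (U V : seq 'I_N) :
  braid_eq (pos_word U) (pos_word V) -> peq (map val U) (map val V).
Proof.
move/braid_eq_image_equiv; rewrite /image_equiv !size_map => H.
apply: (@peq_cancell (Delta2_pow N (size U + size V))).
rewrite [in X in peq X _]addnC !Delta2_powD -!catA.
apply: (peq_trans (peq_catl _ (peq_sym (peq_word_image_pos U)))).
by apply: (peq_trans H); apply: peq_catl; apply: peq_word_image_pos.
Qed.

End Embedding.

Lemma map_eq_cat (T1 T2 : Type) (f : T1 -> T2) U u w : map f U = u ++ w ->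
  exists U1 U2, [/\ U = U1 ++ U2, map f U1 = u & map f U2 = w].
Proof.
move=> E; exists (take (size u) U), (drop (size u) U); split.
- by rewrite cat_take_drop.
- by rewrite map_take E take_size_cat.
- by rewrite map_drop E drop_size_cat.
Qed.

Lemma braid_eq_cat_rel n (U1 U2 a b : seq 'I_n.-1) :
  braid_rel (pos_word a) (pos_word b) ->
  braid_eq (pos_word (U1 ++ a ++ U2)) (pos_word (U1 ++ b ++ U2)).
Proof. by rewrite /pos_word !map_cat; apply: beq_rel. Qed.

Lemma pmove_lift n (U : seq 'I_n.-1) t : pmove (map val U) t ->
  exists2 V, t = map val V & braid_eq (pos_word U) (pos_word V).
Proof.
move E: (map val U) => s st; case: st E => u v a b H E.
- case: (map_eq_cat E) => U1 [[|X [|Y V]] [-> <- //=]] [EX EY EV].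
  exists (U1 ++ [:: Y; X] ++ V); first by rewrite !map_cat /= EX EY EV.
  apply: (braid_eq_cat_rel _ _ (a := [:: X; Y])); apply: brel_comm.
  by move: H; rewrite -EX -EY.
- case: (map_eq_cat E) => U1 [[|X [|Y [|X' V]]] [-> <- //=]] [EX EY EX' EV].
  have -> : X' = X by apply: val_inj; rewrite /= EX EX'.
  exists (U1 ++ [:: Y; X; Y] ++ V); first by rewrite !map_cat /= EX EY EV.
  move: H; rewrite /adjacent -EX -EY => /orP [/eqP H | /eqP H].
  + apply: (braid_eq_cat_rel _ _ (a := [:: X; Y; X]) (b := [:: Y; X; Y])).
    exact: brel_braid.
  + apply/beq_sym/(braid_eq_cat_rel _ _ (a := [:: Y; X; Y]) (b := [:: X; Y; X])).
    exact: brel_braid.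
Qed.

Lemma peq_braid_eq n (U V : seq 'I_n.-1) :
  peq (map val U) (map val V) -> braid_eq (pos_word U) (pos_word V).
Proof.
move EU: (map val U) => s; move EV: (map val V) => t H.
elim: H U EU EV => [s0 | s0 t0 u0 st _ IH] U EU EV.
  by move: EV; rewrite -EU => /(inj_map val_inj) ->; apply: beq_refl.
rewrite -EU in st; have [W EW HUW] := pmove_lift st.
exact: beq_trans HUW (IH W (esym EW) EV).
Qed.

Theorem theorem2p12 (n : nat) (i j : 'I_n.-1) (m : nat) (W : seq 'I_n.-1) :
  (2 <= n)%N -> (1 <= m)%N ->
  braid_eq (pos_word (W ++ nseq m i)) (pos_word (nseq m j ++ W)) ->
  braid_eq (pos_word (W ++ [:: i])) (pos_word (j :: W)).
Proof.
move=> n_ge2 m_gt0 /(braid_eq_pos_peq n_ge2).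
rewrite !map_cat !map_nseq => /(peq_pow_conj m_gt0) HW.
by apply: peq_braid_eq; rewrite map_cat.
Qed.
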